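(* Let $\mathbf{k}$ be a field, let $U$ be a Hopf algebra over $\mathbf{k}$ and let $O$ be a central Hopf subalgebra of $U$. Let $\chi\in(\operatorname{Spec} O)(\mathbf{k})$, and let $R$ be the algebra of functions on the closed subgroup scheme of the affine group scheme $\operatorname{Spec} O$ generated by $\chi$, with $O\to R$ the natural (restriction) map. Then $U\otimes_O R$ is a Hopf algebra; more precisely, the ideal of the Hopf algebra $U\otimes_{\mathbf{k}} R$ generated by all elements $x\otimes 1-1\otimes\pi(x)$, $x\in O$, where $\pi:O\to R$ is the natural map, is a Hopf ideal, so that $U\otimes_O R$ inherits a Hopf algebra structure for which the quotient map $U\otimes_{\mathbf{k}}R\to U\otimes_O R$ is a Hopf algebra homomorphism.
   Context: Since $O$ is a commutative Hopf algebra, $\operatorname{Spec} O$ is an affine group scheme over $\mathbf{k}$, and its $\mathbf{k}$-points are the algebra homomorphisms $O\to\mathbf{k}$. The closed subgroup scheme generated by $\chi$ is the smallest closed subgroup scheme containing the point $\chi$; its coordinate ring $R$ is a quotient Hopf algebra of $O$. *)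

(* Hopf algebras over a field k, encoded without a tensor
   product library: an element of A (x)_k B is represented by a finite formal
   sum of pure tensors (a list of pairs); two such lists denote the same tensor
   iff every k-bilinear map agrees on them (the universal property / the
   definition of A (x) B as the free module modulo bilinearity relations). *)
From HB Require Import structures.
From mathcomp Require Import all_boot all_order all_algebra.
Set Implicit Arguments. Unset Strict Implicit. Unset Printing Implicit Defensive.
Import GRing.Theory.
Local Open Scope ring_scope.

Definition bilinear_map (k : fieldType) (A B W : lmodType k) (f : A -> B -> W)
  : Prop :=
  (forall (b : B) (c : k) (a a' : A), f (c *: a + a') b = c *: f a b + f a' b) /\
  (forall (a : A) (c : k) (b b' : B), f a (c *: b + b') = c *: f a b + f a b').

Definition trilinear_map (k : fieldType) (A B C W : lmodType k)
  (f : A -> B -> C -> W) : Prop :=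
  (forall (b : B) (d : C) (c : k) (a a' : A),
      f (c *: a + a') b d = c *: f a b d + f a' b d) /\
  (forall (a : A) (d : C) (c : k) (b b' : B),
      f a (c *: b + b') d = c *: f a b d + f a b' d) /\
  (forall (a : A) (b : B) (c : k) (d d' : C),
      f a b (c *: d + d') = c *: f a b d + f a b d').

Definition tens_eq (k : fieldType) (A B : lmodType k) (s t : seq (A * B))
  : Prop :=
  forall (W : lmodType k) (f : A -> B -> W), bilinear_map f ->
    \sum_(p <- s) f p.1 p.2 = \sum_(p <- t) f p.1 p.2.

Definition tens3_eq (k : fieldType) (A B C : lmodType k)
  (s t : seq (A * B * C)) : Prop :=
  forall (W : lmodType k) (f : A -> B -> C -> W), trilinear_map f ->
    \sum_(p <- s) f p.1.1 p.1.2 p.2 = \sum_(p <- t) f p.1.1 p.1.2 p.2.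

Definition is_hopf (k : fieldType) (H : algType k) (D : H -> seq (H * H))
  (e : H -> k) (S : H -> H) : Prop :=
  (forall (c : k) (u v : H),
      tens_eq (D (c *: u + v)) ([seq (c *: p.1, p.2) | p <- D u] ++ D v)) /\
  (forall u v : H,
      tens_eq (D (u * v)) [seq (p.1 * q.1, p.2 * q.2) | p <- D u, q <- D v]) /\
  tens_eq (D 1) [:: (1, 1)] /\
  (forall u : H,
      tens3_eq [seq (q.1, q.2, p.2) | p <- D u, q <- D p.1]
               [seq (p.1, q.1, q.2) | p <- D u, q <- D p.2]) /\
  (forall (c : k) (u v : H), e (c *: u + v) = c * e u + e v) /\
  (forall u v : H, e (u * v) = e u * e v) /\
  e 1 = 1 /\
  (forall u : H, \sum_(p <- D u) e p.1 *: p.2 = u) /\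
  (forall u : H, \sum_(p <- D u) e p.2 *: p.1 = u) /\
  (forall (c : k) (u v : H), S (c *: u + v) = c *: S u + S v) /\
  (forall u : H, \sum_(p <- D u) S p.1 * p.2 = (e u)%:A) /\
  (forall u : H, \sum_(p <- D u) p.1 * S p.2 = (e u)%:A).

(* f : H1 -> H2 is a morphism of Hopf algebras (= bialgebra morphism) *)
Definition hopf_hom (k : fieldType) (H1 H2 : algType k)
  (D1 : H1 -> seq (H1 * H1)) (e1 : H1 -> k)
  (D2 : H2 -> seq (H2 * H2)) (e2 : H2 -> k) (f : H1 -> H2) : Prop :=
  (forall (c : k) (u v : H1), f (c *: u + v) = c *: f u + f v) /\
  (forall u v : H1, f (u * v) = f u * f v) /\
  f 1 = 1 /\
  (forall u : H1, tens_eq (D2 (f u)) [seq (f p.1, f p.2) | p <- D1 u]) /\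
  (forall u : H1, e2 (f u) = e1 u).

Definition hopf_ideal (k : fieldType) (H : algType k) (D : H -> seq (H * H))
  (e : H -> k) (S : H -> H) (I : H -> Prop) : Prop :=
  I 0 /\
  (forall u v : H, I u -> I v -> I (u + v)) /\
  (forall (c : k) (u : H), I u -> I (c *: u)) /\
  (forall a u b : H, I u -> I (a * u * b)) /\
  (forall u : H, I u ->
     exists s : seq (H * H), tens_eq (D u) s /\
       (forall p, p \in s -> I p.1 \/ I p.2)) /\
  (forall u : H, I u -> e u = 0) /\
  (forall u : H, I u -> I (S u)).

(* a k-point chi of Spec O: a k-algebra homomorphism O -> k *)
Definition kpoint (k : fieldType) (O : algType k) (chi : O -> k) : Prop :=
  (forall (c : k) (u v : O), chi (c *: u + v) = c * chi u + chi v) /\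
  (forall u v : O, chi (u * v) = chi u * chi v) /\
  chi 1 = 1.

(* I is the Hopf ideal defining the closed subgroup scheme of Spec O generated
   by chi: closed subgroup schemes of Spec O are the V(I), I a Hopf ideal;
   chi lies in V(I) iff chi vanishes on I; the smallest such subgroup scheme
   corresponds to the largest such Hopf ideal. *)
Definition gen_subgroup_ideal (k : fieldType) (O : algType k)
  (D : O -> seq (O * O)) (e : O -> k) (S : O -> O) (chi : O -> k)
  (I : O -> Prop) : Prop :=
  hopf_ideal D e S I /\ (forall x, I x -> chi x = 0) /\
  (forall I' : O -> Prop, hopf_ideal D e S I' ->
     (forall x, I' x -> chi x = 0) -> forall x, I' x -> I x).

Definition is_tensor_algebra (k : fieldType) (A B T : algType k)
  (rho : A -> B -> T) : Prop :=
  bilinear_map rho /\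
  (forall (a a' : A) (b b' : B), rho a b * rho a' b' = rho (a * a') (b * b')) /\
  rho 1 1 = 1 /\
  (forall (W : lmodType k) (f : A -> B -> W), bilinear_map f ->
     exists g : T -> W,
       (forall (c : k) (x y : T), g (c *: x + y) = c *: g x + g y) /\
       (forall a b, g (rho a b) = f a b) /\
       (forall g' : T -> W,
          (forall (c : k) (x y : T), g' (c *: x + y) = c *: g' x + g' y) ->
          (forall a b, g' (rho a b) = f a b) -> forall x, g' x = g x)).

Definition tensor_hopf_structure (k : fieldType) (A B T : algType k)
  (rho : A -> B -> T)
  (DA : A -> seq (A * A)) (eA : A -> k) (SA : A -> A)
  (DB : B -> seq (B * B)) (eB : B -> k) (SB : B -> B)
  (DT : T -> seq (T * T)) (eT : T -> k) (ST : T -> T) : Prop :=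
  (forall (c : k) (x y : T),
      tens_eq (DT (c *: x + y)) ([seq (c *: p.1, p.2) | p <- DT x] ++ DT y)) /\
  (forall a b, tens_eq (DT (rho a b))
       [seq (rho p.1 q.1, rho p.2 q.2) | p <- DA a, q <- DB b]) /\
  (forall (c : k) (x y : T), eT (c *: x + y) = c * eT x + eT y) /\
  (forall a b, eT (rho a b) = eA a * eB b) /\
  (forall (c : k) (x y : T), ST (c *: x + y) = c *: ST x + ST y) /\
  (forall a b, ST (rho a b) = rho (SA a) (SB b)).

(* The ideal is generated by the differences g x = f1 x - f2 x of the two Hopf
   algebra maps f1 = (x |-> iota x (x) 1) and f2 = (x |-> 1 (x) pi x) from O to
   U (x) R.  For any two Hopf algebra maps,
     Delta (g x) = sum g x1 (x) f1 x2 + f2 x1 (x) g x2,   e (g x) = 0,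
   and S (g x) = g (S x) because Hopf maps commute with antipodes; since Delta
   and e are multiplicative and S is antimultiplicative, the two-sided ideal
   generated by such elements is a Hopf ideal.  That U (x) R is a Hopf algebra
   is checked on pure tensors, a linear map on U (x) R being determined by its
   values there. *)

From HB Require Import structures.
From mathcomp Require Import all_boot all_order all_algebra.
Import GRing.Theory.
Local Open Scope ring_scope.
Set Implicit Arguments. Unset Strict Implicit. Unset Printing Implicit Defensive.

Section LinearMaps.
Variable k : fieldType.

Section LinearFacts.
Variables (V W : lmodType k) (g : V -> W).
Hypothesis lin_g : linear g.
(* [linear g] is exactly the [GRing.isLinear] axiom, so [g] packs as a
   [{linear V -> W}]. *)
Let gL : {linear V -> W} := HB.pack g (GRing.isLinear.Build k V W *:%R g lin_g).

Lemma lin0 : g 0 = 0. Proof. exact: (raddf0 gL). Qed.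
Lemma linD x y : g (x + y) = g x + g y. Proof. exact: (raddfD gL). Qed.
Lemma linB x y : g (x - y) = g x - g y. Proof. exact: (raddfB gL). Qed.
Lemma linZ c x : g (c *: x) = c *: g x. Proof. exact: (linearZ_LR gL). Qed.
Lemma lin_sum (I : Type) (s : seq I) (F : I -> V) :
  g (\sum_(i <- s) F i) = \sum_(i <- s) g (F i).
Proof. exact: (raddf_sum gL). Qed.
End LinearFacts.

Section ScalarFacts.
Variables (V : lmodType k) (g : V -> k).
Hypothesis scal_g : scalar g.
Let gL : {scalar V} := HB.pack g (GRing.isLinear.Build k V k *%R g scal_g).

Lemma scalarB x y : g (x - y) = g x - g y. Proof. exact: (raddfB gL). Qed.
Lemma scalar_sum (I : Type) (s : seq I) (F : I -> V) :
  g (\sum_(i <- s) F i) = \sum_(i <- s) g (F i).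
Proof. exact: (raddf_sum gL). Qed.
End ScalarFacts.

Lemma linear_comp (U V W : lmodType k) (h : V -> W) (g : U -> V) :
  linear h -> linear g -> linear (fun x => h (g x)).
Proof. by move=> lh lg c x y; rewrite lg lh. Qed.
Lemma linear_id (V : lmodType k) : linear (fun x : V => x).
Proof. by []. Qed.
Lemma linear_sub (V W : lmodType k) (g h : V -> W) :
  linear g -> linear h -> linear (fun x => g x - h x).
Proof. by move=> lg lh c x y; rewrite lg lh scalerBr opprD addrACA. Qed.
Lemma linear_sumf (V W : lmodType k) (I : Type) (s : seq I) (F : I -> V -> W) :
  (forall i, linear (F i)) -> linear (fun x => \sum_(i <- s) F i x).
Proof.
move=> lF c x y; rewrite scaler_sumr -big_split.
by apply: eq_bigr => i _; apply: lF.
Qed.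
Lemma linear_mulr (V : lmodType k) (A : algType k) (g : V -> A) (a : A) :
  linear g -> linear (fun x => g x * a).
Proof. by move=> lg c x y; rewrite lg mulrDl scalerAl. Qed.
Lemma linear_mull (V : lmodType k) (A : algType k) (g : V -> A) (a : A) :
  linear g -> linear (fun x => a * g x).
Proof. by move=> lg c x y; rewrite lg mulrDr scalerAr. Qed.
Lemma linear_scale (V W : lmodType k) (g : V -> W) (a : k) :
  linear g -> linear (fun x => a *: g x).
Proof. by move=> lg c x y; rewrite lg scalerDr !scalerA mulrC. Qed.
Lemma linear_scalar_scale (V W : lmodType k) (g : V -> k) (w : W) :
  scalar g -> linear (fun x => g x *: w).
Proof. by move=> sg c x y; rewrite sg scalerDl scalerA. Qed.

Lemma bilinearP (A B W : lmodType k) (f : A -> B -> W) :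
  (forall b, linear (f^~ b)) -> (forall a, linear (f a)) -> bilinear_map f.
Proof. by split. Qed.
Lemma trilinearP (A B C W : lmodType k) (f : A -> B -> C -> W) :
  (forall b d, linear (fun a => f a b d)) -> (forall a d, linear (fun b => f a b d)) ->
  (forall a b, linear (f a b)) -> trilinear_map f.
Proof. by split; [|split]. Qed.

Section Bilinear.
Variables (A B W : lmodType k) (f : A -> B -> W).
Hypothesis bil_f : bilinear_map f.
Lemma bilinear_l b : linear (f^~ b). Proof. exact: bil_f.1. Qed.
Lemma bilinear_r a : linear (f a). Proof. exact: bil_f.2. Qed.
End Bilinear.

Section Trilinear.
Variables (A B C W : lmodType k) (f : A -> B -> C -> W).
Hypothesis tril_f : trilinear_map f.
Lemma trilinear_1 b d : linear (fun a => f a b d). Proof. exact: tril_f.1. Qed.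
Lemma trilinear_2 a d : linear (fun b => f a b d). Proof. exact: tril_f.2.1. Qed.
Lemma trilinear_3 a b : linear (f a b). Proof. exact: tril_f.2.2. Qed.
End Trilinear.

Lemma tens_eqP (A B W : lmodType k) (s t : seq (A * B)) (F : A * B -> W) :
  tens_eq s t -> bilinear_map (fun x y => F (x, y)) ->
  \sum_(p <- s) F p = \sum_(p <- t) F p.
Proof.
move=> eq_st bil_F.
have sumE r : \sum_(p <- r) F p = \sum_(p <- r) (fun x y => F (x, y)) p.1 p.2.
  by apply: eq_bigr => -[].
by rewrite !sumE; exact: (eq_st _ _ bil_F).
Qed.

Lemma tens3_eqP (A B C W : lmodType k) (s t : seq (A * B * C)) (F : A * B * C -> W) :
  tens3_eq s t -> trilinear_map (fun x y z => F (x, y, z)) ->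
  \sum_(p <- s) F p = \sum_(p <- t) F p.
Proof.
move=> eq_st tril_F.
have sumE r : \sum_(p <- r) F p =
              \sum_(p <- r) (fun x y z => F (x, y, z)) p.1.1 p.1.2 p.2.
  by apply: eq_bigr => -[[]].
by rewrite !sumE; exact: (eq_st _ _ tril_F).
Qed.

Lemma coproduct_sum_linear (H W : lmodType k) (D : H -> seq (H * H))
  (D_lin : forall (c : k) (u v : H),
      tens_eq (D (c *: u + v)) ([seq (c *: p.1, p.2) | p <- D u] ++ D v))
  (F : H * H -> W) :
  bilinear_map (fun x y => F (x, y)) -> linear (fun u => \sum_(p <- D u) F p).
Proof.
move=> bil_F c x y /=; rewrite (tens_eqP (D_lin c x y) bil_F) big_cat big_map.
rewrite scaler_sumr; congr (_ + _); apply: eq_bigr => -[a b] _ /=.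
exact: (linZ (bilinear_l bil_F b)).
Qed.
End LinearMaps.

Ltac linearity :=
  repeat (first
   [ match goal with |- forall _, _ => intro end
   | progress simpl
   | apply: bilinearP
   | apply: trilinearP
   | apply: linear_id
   | apply: linear_sumf
   | apply: linear_scale
   | apply: linear_mulr
   | apply: linear_mull
   | apply: linear_scalar_scale; solve [eassumption]
   | match goal with
     | bf : bilinear_map ?f |- linear (fun x => ?f (@?g x) ?b) =>
         apply: (linear_comp (bilinear_l bf b) (g := g))
     | bf : bilinear_map ?f |- linear (fun x => ?f ?a (@?g x)) =>
         apply: (linear_comp (bilinear_r bf a) (g := g))
     | bf : bilinear_map ?f |- linear (?f ?a) => exact: (bilinear_r bf a)
     | tf : trilinear_map ?f |- linear (fun x => ?f (@?g x) ?b ?d) =>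
         apply: (linear_comp (trilinear_1 tf b d) (g := g))
     | tf : trilinear_map ?f |- linear (fun x => ?f ?a (@?g x) ?d) =>
         apply: (linear_comp (trilinear_2 tf a d) (g := g))
     | tf : trilinear_map ?f |- linear (fun x => ?f ?a ?b (@?g x)) =>
         apply: (linear_comp (trilinear_3 tf a b) (g := g))
     | lh : linear ?h |- linear (fun x => ?h (@?g x)) =>
         apply: (linear_comp lh (g := g))
     | D_lin : forall (c : _) (u v : _), tens_eq (?D (c *: u + v)) _
       |- linear (fun x => \sum_(p <- ?D (@?g x)) @?F p) =>
         apply: (linear_comp (coproduct_sum_linear D_lin (F := F) _) (g := g))
     end ]).

Lemma exchange_big_nested (I J L M : Type) (V : zmodType) (r : seq I)
  (s : I -> seq J) (r' : seq L) (s' : L -> seq M) (F : I -> J -> L -> M -> V) :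
  \sum_(i <- r) \sum_(j <- s i) \sum_(l <- r') \sum_(m <- s' l) F i j l m =
  \sum_(l <- r') \sum_(m <- s' l) \sum_(i <- r) \sum_(j <- s i) F i j l m.
Proof.
transitivity (\sum_(i <- r) \sum_(l <- r') \sum_(j <- s i) \sum_(m <- s' l) F i j l m).
  by apply: eq_bigr => i _; rewrite exchange_big.
rewrite exchange_big; apply: eq_bigr => l _.
by rewrite -exchange_big; apply: eq_bigr => i _; rewrite exchange_big.
Qed.

Section HopfAlgebra.
Variables (k : fieldType) (H : algType k).
Variables (D : H -> seq (H * H)) (e : H -> k) (S : H -> H).
Hypothesis hH : is_hopf D e S.

Lemma hopf_coproduct_linear (c : k) (u v : H) :
  tens_eq (D (c *: u + v)) ([seq (c *: p.1, p.2) | p <- D u] ++ D v).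
Proof. by case: hH. Qed.
Lemma hopf_coproductM (u v : H) :
  tens_eq (D (u * v)) [seq (p.1 * q.1, p.2 * q.2) | p <- D u, q <- D v].
Proof. by case: hH => _ []. Qed.
Lemma hopf_coproduct1 : tens_eq (D 1) [:: (1, 1)].
Proof. by case: hH => _ [_ []]. Qed.
Lemma hopf_coassoc (u : H) :
  tens3_eq [seq (q.1, q.2, p.2) | p <- D u, q <- D p.1]
           [seq (p.1, q.1, q.2) | p <- D u, q <- D p.2].
Proof. by case: hH => _ [_ [_ []]]. Qed.
Lemma hopf_counit_scalar : scalar e.
Proof. by case: hH => _ [_ [_ [_ []]]]. Qed.
Lemma hopf_counitM (u v : H) : e (u * v) = e u * e v.
Proof. by case: hH => _ [_ [_ [_ [_ []]]]]. Qed.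
Lemma hopf_counit1 : e 1 = 1.
Proof. by case: hH => _ [_ [_ [_ [_ [_ []]]]]]. Qed.
Lemma hopf_counitl (u : H) : \sum_(p <- D u) e p.1 *: p.2 = u.
Proof. by case: hH => _ [_ [_ [_ [_ [_ [_ []]]]]]]. Qed.
Lemma hopf_counitr (u : H) : \sum_(p <- D u) e p.2 *: p.1 = u.
Proof. by case: hH => _ [_ [_ [_ [_ [_ [_ [_ []]]]]]]]. Qed.
Lemma hopf_antipode_linear : linear S.
Proof. by case: hH => _ [_ [_ [_ [_ [_ [_ [_ [_ []]]]]]]]]. Qed.
Lemma hopf_antipodel (u : H) : \sum_(p <- D u) S p.1 * p.2 = (e u)%:A.
Proof. by case: hH => _ [_ [_ [_ [_ [_ [_ [_ [_ [_ []]]]]]]]]]. Qed.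
Lemma hopf_antipoder (u : H) : \sum_(p <- D u) p.1 * S p.2 = (e u)%:A.
Proof. by case: hH => _ [_ [_ [_ [_ [_ [_ [_ [_ [_ []]]]]]]]]]. Qed.

Lemma hopf_coassoc_sum (W : lmodType k) (Psi : H -> H -> H -> W) u :
  trilinear_map Psi ->
  \sum_(p <- D u) \sum_(q <- D p.1) Psi q.1 q.2 p.2 =
  \sum_(p <- D u) \sum_(q <- D p.2) Psi p.1 q.1 q.2.
Proof.
move=> tril_Psi.
have := tens3_eqP (F := fun z => Psi z.1.1 z.1.2 z.2) (hopf_coassoc u).
by rewrite !big_allpairs_dep; apply.
Qed.

Let D_linear := hopf_coproduct_linear.

Lemma hopf_coproduct0 : tens_eq (D 0) [::].
Proof.
move=> W F bil_F; rewrite big_nil.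
exact: (lin0 (coproduct_sum_linear D_linear (F := fun p => F p.1 p.2) bil_F)).
Qed.

Lemma hopf_coproductD u v s t :
  tens_eq (D u) s -> tens_eq (D v) t -> tens_eq (D (u + v)) (s ++ t).
Proof.
move=> Du Dv W F bil_F; rewrite big_cat -(Du W F bil_F) -(Dv W F bil_F).
exact: (linD (coproduct_sum_linear D_linear (F := fun p => F p.1 p.2) bil_F)).
Qed.

Lemma hopf_coproductM_tens u v s t :
  tens_eq (D u) s -> tens_eq (D v) t ->
  tens_eq (D (u * v)) [seq (p.1 * q.1, p.2 * q.2) | p <- s, q <- t].
Proof.
move=> Du Dv W F bil_F.
rewrite (tens_eqP (hopf_coproductM u v)) ?big_allpairs_dep /=; last by linearity.
rewrite (tens_eqP (F := fun p => \sum_(q <- D v) F (p.1 * q.1) (p.2 * q.2)) Du) /=;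
  last by linearity.
apply: eq_bigr => p _.
by rewrite (tens_eqP (F := fun q => F (p.1 * q.1) (p.2 * q.2)) Dv) //; linearity.
Qed.
Definition biconv (F G : H -> H -> H) u v :=
  \sum_(p <- D u) \sum_(q <- D v) F p.1 q.1 * G p.2 q.2.

Definition biunit (a b : H) : H := (e a * e b)%:A.

Lemma eq_biconv F F' G G' u v : (forall a b, F a b = F' a b) ->
  (forall a b, G a b = G' a b) -> biconv F G u v = biconv F' G' u v.
Proof.
by move=> eqF eqG; apply: eq_bigr => p _; apply: eq_bigr => q _; rewrite eqF eqG.
Qed.

Lemma biconvA F G K u v : bilinear_map F -> bilinear_map G -> bilinear_map K ->
  biconv (biconv F G) K u v = biconv F (biconv G K) u v.
Proof.
move=> bF bG bK; rewrite /biconv.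
pose Psi a b c :=
  \sum_(q <- D v) \sum_(q' <- D q.1) F a q'.1 * G b q'.2 * K c q.2.
pose Phi a b c :=
  \sum_(p <- D u) \sum_(p' <- D p.2) F p.1 a * G p'.1 b * K p'.2 c.
transitivity (\sum_(p <- D u) \sum_(p' <- D p.1) Psi p'.1 p'.2 p.2).
  apply: eq_bigr => p _; rewrite /Psi [RHS]exchange_big; apply: eq_bigr => q _.
  by rewrite mulr_suml; apply: eq_bigr => p' _; rewrite mulr_suml.
rewrite hopf_coassoc_sum; last by rewrite /Psi; linearity.
transitivity (\sum_(q <- D v) \sum_(q' <- D q.1) Phi q'.1 q'.2 q.2).
  by rewrite /Psi /Phi exchange_big_nested.
rewrite hopf_coassoc_sum; last by rewrite /Phi; linearity.
rewrite /Phi exchange_big_nested; apply: eq_bigr => p _.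
rewrite exchange_big; apply: eq_bigr => q _; rewrite mulr_sumr.
apply: eq_bigr => p' _; rewrite mulr_sumr.
by apply: eq_bigr => q' _; rewrite mulrA.
Qed.

Lemma biconv_unitr F u v : bilinear_map F -> biconv F biunit u v = F u v.
Proof.
move=> bF; rewrite /biconv /biunit.
transitivity (\sum_(p <- D u) e p.2 *: F p.1 v).
  apply: eq_bigr => p _; rewrite -[in RHS](hopf_counitr v).
  rewrite (lin_sum (bilinear_r bF _)) scaler_sumr; apply: eq_bigr => q _.
  by rewrite (linZ (bilinear_r bF _)) mulr_algr scalerA.
rewrite -{2}(hopf_counitr u) (lin_sum (bilinear_l bF _)).
by apply: eq_bigr => p _; rewrite (linZ (bilinear_l bF _)).
Qed.

Lemma biconv_unitl F u v : bilinear_map F -> biconv biunit F u v = F u v.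
Proof.
move=> bF; rewrite /biconv /biunit.
transitivity (\sum_(p <- D u) e p.1 *: F p.2 v).
  apply: eq_bigr => p _; rewrite -[in RHS](hopf_counitl v).
  rewrite (lin_sum (bilinear_r bF _)) scaler_sumr; apply: eq_bigr => q _.
  by rewrite (linZ (bilinear_r bF _)) mulr_algl scalerA.
rewrite -{2}(hopf_counitl u) (lin_sum (bilinear_l bF _)).
by apply: eq_bigr => p _; rewrite (linZ (bilinear_l bF _)).
Qed.

Lemma hopf_antipodeM u v : S (u * v) = S v * S u.
Proof.
have lin_S := hopf_antipode_linear.
have bil_SM : bilinear_map (fun a b => S (a * b)) by linearity.
have bil_M : bilinear_map (fun a b : H => a * b) by linearity.
have bil_MS : bilinear_map (fun a b => S b * S a) by linearity.
have SM_inv a b : biconv (fun a b => S (a * b)) *%R a b = biunit a b.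
  rewrite /biconv /biunit -hopf_counitM -hopf_antipodel.
  by rewrite (tens_eqP (hopf_coproductM a b)) ?big_allpairs_dep //; linearity.
have MS_inv a b : biconv *%R (fun a b => S b * S a) a b = biunit a b.
  rewrite /biconv /biunit.
  transitivity (\sum_(p <- D a) p.1 * (\sum_(q <- D b) q.1 * S q.2) * S p.2).
    apply: eq_bigr => p _; rewrite mulr_sumr mulr_suml; apply: eq_bigr => q _.
    by rewrite !mulrA.
  rewrite hopf_antipoder; under eq_bigr do rewrite mulr_algr -scalerAl.
  by rewrite -scaler_sumr hopf_antipoder scalerA mulrC.
(* S o m and m o (S (x) S) o flip are left and right convolution inverses of m *)
have E1 : biconv (fun a b => S (a * b)) biunit u v =
          biconv (fun a b => S (a * b)) (biconv *%R (fun a b => S b * S a)) u v.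
  by apply: eq_biconv => // a b; rewrite MS_inv.
have E2 : biconv (biconv (fun a b => S (a * b)) *%R) (fun a b => S b * S a) u v =
          biconv biunit (fun a b => S b * S a) u v.
  by apply: eq_biconv => // a b; rewrite SM_inv.
by rewrite -(biconv_unitr u v bil_SM) E1 -biconvA // E2 biconv_unitl.
Qed.
End HopfAlgebra.

Section HopfHom.
Variables (k : fieldType) (H1 H2 : algType k).
Variables (D1 : H1 -> seq (H1 * H1)) (e1 : H1 -> k).
Variables (D2 : H2 -> seq (H2 * H2)) (e2 : H2 -> k).
Variable f : H1 -> H2.
Hypothesis hf : hopf_hom D1 e1 D2 e2 f.

Lemma hopf_hom_linear : linear f. Proof. by case: hf. Qed.
Lemma hopf_homM u v : f (u * v) = f u * f v. Proof. by case: hf => _ []. Qed.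
Lemma hopf_hom1 : f 1 = 1. Proof. by case: hf => _ [_ []]. Qed.
Lemma hopf_hom_coproduct u :
  tens_eq (D2 (f u)) [seq (f p.1, f p.2) | p <- D1 u].
Proof. by case: hf => _ [_ [_ []]]. Qed.
Lemma hopf_hom_counit u : e2 (f u) = e1 u. Proof. by case: hf => _ [_ [_ []]]. Qed.
End HopfHom.

Lemma hopf_hom_comp (k : fieldType) (H1 H2 H3 : algType k)
  (D1 : H1 -> seq (H1 * H1)) (e1 : H1 -> k)
  (D2 : H2 -> seq (H2 * H2)) (e2 : H2 -> k)
  (D3 : H3 -> seq (H3 * H3)) (e3 : H3 -> k) (f : H1 -> H2) (g : H2 -> H3) :
  hopf_hom D2 e2 D3 e3 g -> hopf_hom D1 e1 D2 e2 f ->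
  hopf_hom D1 e1 D3 e3 (fun u => g (f u)).
Proof.
move=> hg hf; have lin_f := hopf_hom_linear hf; have lin_g := hopf_hom_linear hg.
split; first exact: linear_comp.
split; first by move=> u v; rewrite (hopf_homM hf) (hopf_homM hg).
split; first by rewrite (hopf_hom1 hf) (hopf_hom1 hg).
split; last by move=> u; rewrite (hopf_hom_counit hg) (hopf_hom_counit hf).
move=> u W F bil_F.
rewrite (tens_eqP (F := fun p => F p.1 p.2) (hopf_hom_coproduct hg (f u))) //.
rewrite big_map (tens_eqP (F := fun p => F (g p.1) (g p.2)) (hopf_hom_coproduct hf u)).
  by rewrite !big_map.
by linearity.
Qed.

Section HopfHomAntipode.
Variables (k : fieldType) (O H : algType k).
Variables (DO : O -> seq (O * O)) (eO : O -> k) (SO : O -> O).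
Variables (D : H -> seq (H * H)) (e : H -> k) (S : H -> H).
Hypotheses (hO : is_hopf DO eO SO) (hH : is_hopf D e S).

Definition conv (F G : O -> H) x := \sum_(p <- DO x) F p.1 * G p.2.

Definition conv_unit (x : O) : H := (eO x)%:A.

Lemma eq_conv F F' G G' x : (forall a, F a = F' a) -> (forall a, G a = G' a) ->
  conv F G x = conv F' G' x.
Proof. by move=> eqF eqG; apply: eq_bigr => p _; rewrite eqF eqG. Qed.

Lemma convA F G K x : linear F -> linear G -> linear K ->
  conv (conv F G) K x = conv F (conv G K) x.
Proof.
move=> lF lG lK; rewrite /conv.
transitivity (\sum_(p <- DO x) \sum_(q <- DO p.1) F q.1 * G q.2 * K p.2).
  by apply: eq_bigr => p _; rewrite mulr_suml.
rewrite (hopf_coassoc_sum hO (Psi := fun a b c => F a * G b * K c)); last by linearity.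
by apply: eq_bigr => p _; rewrite mulr_sumr; apply: eq_bigr => q _; rewrite mulrA.
Qed.

Lemma conv_unitr F x : linear F -> conv F conv_unit x = F x.
Proof.
move=> lF; rewrite /conv /conv_unit -{2}(hopf_counitr hO x) (lin_sum lF).
by apply: eq_bigr => p _; rewrite (linZ lF) mulr_algr.
Qed.

Lemma conv_unitl F x : linear F -> conv conv_unit F x = F x.
Proof.
move=> lF; rewrite /conv /conv_unit -{2}(hopf_counitl hO x) (lin_sum lF).
by apply: eq_bigr => p _; rewrite (linZ lF) mulr_algl.
Qed.

Lemma hopf_hom_antipode (f : O -> H) : hopf_hom DO eO D e f ->
  forall x, S (f x) = f (SO x).
Proof.
move=> hf x; have lin_f := hopf_hom_linear hf.
have lin_S := hopf_antipode_linear hH; have lin_SO := hopf_antipode_linear hO.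
have lin_Sf : linear (fun a => S (f a)) by linearity.
have lin_fS : linear (fun a => f (SO a)) by linearity.
have Sf_inv a : conv (fun a => S (f a)) f a = conv_unit a.
  rewrite /conv /conv_unit -(hopf_hom_counit hf) -(hopf_antipodel hH).
  by rewrite (tens_eqP (hopf_hom_coproduct hf a)) ?big_map //; linearity.
have fS_inv a : conv f (fun a => f (SO a)) a = conv_unit a.
  rewrite /conv /conv_unit; under eq_bigr do rewrite -(hopf_homM hf).
  rewrite -(lin_sum lin_f) (hopf_antipoder hO).
  by rewrite (linZ lin_f) (hopf_hom1 hf).
(* S o f and f o SO are left and right convolution inverses of f *)
rewrite -(conv_unitr x lin_Sf).
rewrite (eq_conv (F' := fun a => S (f a)) (G' := conv f (fun a => f (SO a)))) //.
rewrite -convA // (eq_conv (F' := conv_unit) (G' := fun a => f (SO a))) //.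
exact: conv_unitl.
Qed.
End HopfHomAntipode.

Section TensorHopf.
Variables (k : fieldType) (A B T : algType k).
Variables (DA : A -> seq (A * A)) (eA : A -> k) (SA : A -> A).
Variables (DB : B -> seq (B * B)) (eB : B -> k) (SB : B -> B).
Hypotheses (hA : is_hopf DA eA SA) (hB : is_hopf DB eB SB).
Variables (rho : A -> B -> T) (DT : T -> seq (T * T)) (eT : T -> k) (ST : T -> T).
Hypothesis hT : is_tensor_algebra rho.
Hypothesis hDT : tensor_hopf_structure rho DA eA SA DB eB SB DT eT ST.

Let rho_bilinear : bilinear_map rho. Proof. by case: hT. Qed.
Let rhoM a a' b b' : rho a b * rho a' b' = rho (a * a') (b * b').
Proof. by case: hT => _ []. Qed.
Let rho11 : rho 1 1 = 1. Proof. by case: hT => _ [_ []]. Qed.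
Let rhoZ c c' a b : rho (c *: a) (c' *: b) = (c * c') *: rho a b.
Proof.
rewrite (linZ (bilinear_l rho_bilinear _)).
by rewrite (linZ (bilinear_r rho_bilinear _)) scalerA.
Qed.
Let rho_sum (I J : Type) (s : seq I) (t : seq J) (F : I -> A) (G : J -> B) :
  rho (\sum_(i <- s) F i) (\sum_(j <- t) G j) =
  \sum_(i <- s) \sum_(j <- t) rho (F i) (G j).
Proof.
rewrite (lin_sum (bilinear_l rho_bilinear _)); apply: eq_bigr => i _.
exact: (lin_sum (bilinear_r rho_bilinear _)).
Qed.
Let DT_linear (c : k) (x y : T) :
  tens_eq (DT (c *: x + y)) ([seq (c *: p.1, p.2) | p <- DT x] ++ DT y).
Proof. by case: hDT. Qed.
Let DT_rho a b :
  tens_eq (DT (rho a b)) [seq (rho p.1 q.1, rho p.2 q.2) | p <- DA a, q <- DB b].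
Proof. by case: hDT => _ []. Qed.
Let eT_scalar : scalar eT. Proof. by case: hDT => _ [_ []]. Qed.
Let eT_rho a b : eT (rho a b) = eA a * eB b. Proof. by case: hDT => _ [_ [_ []]]. Qed.
Let ST_linear : linear ST. Proof. by case: hDT => _ [_ [_ [_ []]]]. Qed.
Let ST_rho a b : ST (rho a b) = rho (SA a) (SB b).
Proof. by case: hDT => _ [_ [_ [_ []]]]. Qed.

Lemma tensor_linear_ext (W : lmodType k) (h1 h2 : T -> W) : linear h1 -> linear h2 ->
  (forall a b, h1 (rho a b) = h2 (rho a b)) -> forall t, h1 t = h2 t.
Proof.
move=> lin_h1 lin_h2 eq_h t; have [_ [_ [_ univ]]] := hT.
have [|g [_ [_ g_unique]]] := univ W (fun _ _ => 0).
  by split=> *; rewrite scaler0 addr0.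
(* both [h1 - h2] and [0] extend the zero bilinear map *)
have g_eq0 x : g x = 0.
  by rewrite -(g_unique (fun=> 0)) // => c y z; rewrite scaler0 addr0.
apply/eqP; rewrite -subr_eq0; apply/eqP.
rewrite (g_unique (fun t => h1 t - h2 t)) ?g_eq0 //; first exact: linear_sub.
by move=> a b; rewrite eq_h subrr.
Qed.

Lemma tensor_scalar_ext (h1 h2 : T -> k) : scalar h1 -> scalar h2 ->
  (forall a b, h1 (rho a b) = h2 (rho a b)) -> forall t, h1 t = h2 t.
Proof. exact: (@tensor_linear_ext k^o). Qed.

Lemma tensor_coproduct_sum (W : lmodType k) (F : T * T -> W) a b :
  bilinear_map (fun x y => F (x, y)) ->
  \sum_(p <- DT (rho a b)) F p =
  \sum_(p <- DA a) \sum_(q <- DB b) F (rho p.1 q.1, rho p.2 q.2).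
Proof. by move=> bil_F; rewrite (tens_eqP (DT_rho a b)) // big_allpairs_dep. Qed.

Lemma tensor_coproductM (x y : T) :
  tens_eq (DT (x * y)) [seq (p.1 * q.1, p.2 * q.2) | p <- DT x, q <- DT y].
Proof.
move=> W f bil_f; rewrite big_allpairs_dep /=.
move: x; apply: tensor_linear_ext; [by linearity | by linearity | move=> a b].
move: y; apply: tensor_linear_ext; [by linearity | by linearity | move=> a' b'].
rewrite rhoM tensor_coproduct_sum; last by linearity.
rewrite (tens_eqP (hopf_coproductM hA a a')) ?big_allpairs_dep /=; last by linearity.
rewrite tensor_coproduct_sum; last by linearity.
under [RHS]eq_bigr do under eq_bigr do
  (rewrite tensor_coproduct_sum; last by linearity).
apply: eq_bigr => p _; rewrite [RHS]exchange_big; apply: eq_bigr => p' _ /=.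
rewrite (tens_eqP (hopf_coproductM hB b b')) ?big_allpairs_dep /=; last by linearity.
by apply: eq_bigr => q _; apply: eq_bigr => q' _; rewrite !rhoM.
Qed.

Lemma tensor_coproduct1 : tens_eq (DT 1) [:: (1, 1)].
Proof.
move=> W f bil_f; rewrite -rho11 tensor_coproduct_sum; last by linearity.
rewrite (tens_eqP (hopf_coproduct1 hA)) ?big_seq1 /=; last by linearity.
by rewrite (tens_eqP (hopf_coproduct1 hB)) ?big_seq1 //; linearity.
Qed.

Lemma tensor_coassoc (t : T) :
  tens3_eq [seq (q.1, q.2, p.2) | p <- DT t, q <- DT p.1]
           [seq (p.1, q.1, q.2) | p <- DT t, q <- DT p.2].
Proof.
move=> W f tril_f; rewrite !big_allpairs_dep /=.
move: t; apply: tensor_linear_ext; [by linearity | by linearity | move=> a b].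
rewrite tensor_coproduct_sum /=; last by linearity.
under eq_bigr do under eq_bigr do (rewrite tensor_coproduct_sum; last by linearity).
rewrite tensor_coproduct_sum /=; last by linearity.
under [RHS]eq_bigr do under eq_bigr do
  (rewrite tensor_coproduct_sum; last by linearity).
pose Psi x y z := \sum_(p <- DB b) \sum_(q <- DB p.1)
  f (rho x q.1) (rho y q.2) (rho z p.2).
transitivity (\sum_(p <- DA a) \sum_(q <- DA p.1) Psi q.1 q.2 p.2).
  by apply: eq_bigr => p _ /=; rewrite exchange_big.
rewrite (hopf_coassoc_sum hA (Psi := Psi)) /Psi; last by linearity.
apply: eq_bigr => p _; rewrite [RHS]exchange_big; apply: eq_bigr => q _ /=.
pose Phi x y z := f (rho p.1 x) (rho q.1 y) (rho q.2 z).
by rewrite (hopf_coassoc_sum hB (Psi := Phi)) // /Phi; linearity.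
Qed.

Lemma tensor_counitM (x y : T) : eT (x * y) = eT x * eT y.
Proof.
move: x; apply: tensor_scalar_ext => [c x x'|c x x'|a b].
- by rewrite mulrDl -scalerAl eT_scalar.
- by rewrite eT_scalar mulrDl mulrA.
move: y; apply: tensor_scalar_ext => [c y y'|c y y'|a' b'].
- by rewrite mulrDr -scalerAr eT_scalar.
- by rewrite eT_scalar mulrDr !mulrA [_ * c]mulrC.
by rewrite rhoM !eT_rho (hopf_counitM hA) (hopf_counitM hB) mulrACA.
Qed.

Lemma tensor_counit1 : eT 1 = 1.
Proof. by rewrite -rho11 eT_rho (hopf_counit1 hA) (hopf_counit1 hB) mulr1. Qed.

Lemma tensor_counitl (t : T) : \sum_(p <- DT t) eT p.1 *: p.2 = t.
Proof.
move: t; apply: tensor_linear_ext; [by linearity | by linearity | move=> a b].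
rewrite tensor_coproduct_sum /=; last by linearity.
rewrite -[in RHS](hopf_counitl hA a) -[in RHS](hopf_counitl hB b) rho_sum.
by apply: eq_bigr => p _; apply: eq_bigr => q _; rewrite rhoZ eT_rho.
Qed.

Lemma tensor_counitr (t : T) : \sum_(p <- DT t) eT p.2 *: p.1 = t.
Proof.
move: t; apply: tensor_linear_ext; [by linearity | by linearity | move=> a b].
rewrite tensor_coproduct_sum /=; last by linearity.
rewrite -[in RHS](hopf_counitr hA a) -[in RHS](hopf_counitr hB b) rho_sum.
by apply: eq_bigr => p _; apply: eq_bigr => q _; rewrite rhoZ eT_rho.
Qed.

Lemma tensor_antipodel (t : T) : \sum_(p <- DT t) ST p.1 * p.2 = (eT t)%:A.
Proof.
move: t; apply: tensor_linear_ext; [by linearity | by linearity | move=> a b].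
rewrite tensor_coproduct_sum /=; last by linearity.
transitivity (rho (\sum_(p <- DA a) SA p.1 * p.2) (\sum_(q <- DB b) SB q.1 * q.2)).
  by rewrite rho_sum; apply: eq_bigr => p _; apply: eq_bigr => q _; rewrite ST_rho rhoM.
by rewrite (hopf_antipodel hA) (hopf_antipodel hB) rhoZ rho11 eT_rho.
Qed.

Lemma tensor_antipoder (t : T) : \sum_(p <- DT t) p.1 * ST p.2 = (eT t)%:A.
Proof.
move: t; apply: tensor_linear_ext; [by linearity | by linearity | move=> a b].
rewrite tensor_coproduct_sum /=; last by linearity.
transitivity (rho (\sum_(p <- DA a) p.1 * SA p.2) (\sum_(q <- DB b) q.1 * SB q.2)).
  by rewrite rho_sum; apply: eq_bigr => p _; apply: eq_bigr => q _; rewrite ST_rho rhoM.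
by rewrite (hopf_antipoder hA) (hopf_antipoder hB) rhoZ rho11 eT_rho.
Qed.

Lemma tensor_is_hopf : is_hopf DT eT ST.
Proof.
split; first exact: DT_linear.
split; first exact: tensor_coproductM.
split; first exact: tensor_coproduct1.
split; first exact: tensor_coassoc.
split; first exact: eT_scalar.
split; first exact: tensor_counitM.
split; first exact: tensor_counit1.
split; first exact: tensor_counitl.
split; first exact: tensor_counitr.
split; first exact: ST_linear.
split; first exact: tensor_antipodel.
exact: tensor_antipoder.
Qed.

Lemma tensor_hopf_hom_l : hopf_hom DA eA DT eT (rho^~ 1).
Proof.
split; first exact: bilinear_l.
split; first by move=> a a'; rewrite rhoM mulr1.
split; first exact: rho11.
split; last by move=> a; rewrite eT_rho (hopf_counit1 hB) mulr1.
move=> a W f bil_f; rewrite tensor_coproduct_sum ?big_map; last by linearity.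
apply: eq_bigr => p _.
by rewrite (tens_eqP (hopf_coproduct1 hB)) ?big_seq1 //; linearity.
Qed.

Lemma tensor_hopf_hom_r : hopf_hom DB eB DT eT (rho 1).
Proof.
split; first exact: bilinear_r.
split; first by move=> b b'; rewrite rhoM mulr1.
split; first exact: rho11.
split; last by move=> b; rewrite eT_rho (hopf_counit1 hA) mul1r.
move=> b W f bil_f; rewrite tensor_coproduct_sum ?big_map; last by linearity.
by rewrite (tens_eqP (hopf_coproduct1 hA)) ?big_seq1 //; linearity.
Qed.
End TensorHopf.

Section GeneratedIdeal.
Variables (k : fieldType) (H : algType k) (I : Type) (G : I -> H).

Definition ideal_gen (t : H) : Prop :=
  exists l : seq (H * I * H), t = \sum_(z <- l) z.1.1 * G z.1.2 * z.2.

Lemma ideal_gen0 : ideal_gen 0.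
Proof. by exists [::]; rewrite big_nil. Qed.

Lemma ideal_genD u v : ideal_gen u -> ideal_gen v -> ideal_gen (u + v).
Proof. by move=> [l ->] [l' ->]; exists (l ++ l'); rewrite big_cat. Qed.

Lemma ideal_gen_sum (J : Type) (r : seq J) (F : J -> H) :
  (forall j, ideal_gen (F j)) -> ideal_gen (\sum_(j <- r) F j).
Proof.
by move=> JF; elim/big_ind: _ => //; [apply: ideal_gen0 | apply: ideal_genD].
Qed.

Lemma ideal_genZ c u : ideal_gen u -> ideal_gen (c *: u).
Proof.
move=> [l ->]; exists [seq (c *: z.1.1, z.1.2, z.2) | z <- l].
by rewrite big_map scaler_sumr; apply: eq_bigr => z _; rewrite !scalerAl.
Qed.

Lemma ideal_genM a u b : ideal_gen u -> ideal_gen (a * u * b).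
Proof.
move=> [l ->]; exists [seq (a * z.1.1, z.1.2, z.2 * b) | z <- l].
by rewrite big_map mulr_sumr mulr_suml; apply: eq_bigr => z _; rewrite !mulrA.
Qed.

Lemma ideal_gen_generator i : ideal_gen (G i).
Proof. by exists [:: (1, i, 1)]; rewrite big_seq1 mul1r mulr1. Qed.
End GeneratedIdeal.

Section HopfIdealGen.
Variables (k : fieldType) (H : algType k).
Variables (D : H -> seq (H * H)) (e : H -> k) (S : H -> H).
Hypothesis hH : is_hopf D e S.
Variables (I : Type) (G : I -> H).
Hypothesis D_G : forall i, exists s, tens_eq (D (G i)) s /\
  forall p, p \in s -> ideal_gen G p.1 \/ ideal_gen G p.2.
Hypothesis e_G : forall i, e (G i) = 0.
Hypothesis S_G : forall i, ideal_gen G (S (G i)).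

Lemma ideal_gen_coproduct u : ideal_gen G u -> exists s, tens_eq (D u) s /\
  forall p, p \in s -> ideal_gen G p.1 \/ ideal_gen G p.2.
Proof.
move=> [l ->]; elim/big_ind: _ => [| x y [s [Dx sJ]] [t [Dy tJ]] | [[a i] b] _ /=].
- by exists [::]; split; first exact: (hopf_coproduct0 hH).
- exists (s ++ t); split; first exact: (hopf_coproductD hH).
  by move=> p; rewrite mem_cat => /orP [/sJ | /tJ].
have [s [DG sJ]] := D_G i.
pose s3 := [seq (p.1 * q.1, p.2 * q.2) |
            p <- [seq (p.1 * q.1, p.2 * q.2) | p <- D a, q <- s], q <- D b].
have D_refl v : tens_eq (D v) (D v) by [].
exists s3; split.
  exact (hopf_coproductM_tens hH (hopf_coproductM_tens hH (D_refl a) DG) (D_refl b)).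
move=> w /allpairsP [[pq r] [/allpairsP [[p q] [_ /sJ qJ ->]] _ ->]] /=.
by case: qJ => qJ; [left | right]; apply: ideal_genM.
Qed.

Lemma ideal_gen_hopf_ideal : hopf_ideal D e S (ideal_gen G).
Proof.
split; first exact: ideal_gen0.
split; first exact: ideal_genD.
split; first exact: ideal_genZ.
split; first by move=> a u b; apply: ideal_genM.
split; first exact: ideal_gen_coproduct.
split=> u [l ->].
  rewrite (scalar_sum (hopf_counit_scalar hH)) big1 // => z _.
  by rewrite !(hopf_counitM hH) e_G mulr0 mul0r.
rewrite (lin_sum (hopf_antipode_linear hH)); apply: ideal_gen_sum => z.
by rewrite !(hopf_antipodeM hH) mulrA; apply: ideal_genM.
Qed.
End HopfIdealGen.

Section EqualizerIdeal.
Variables (k : fieldType) (O H : algType k).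
Variables (DO : O -> seq (O * O)) (eO : O -> k) (SO : O -> O).
Variables (D : H -> seq (H * H)) (e : H -> k) (S : H -> H).
Hypotheses (hO : is_hopf DO eO SO) (hH : is_hopf D e S).
Variables (f1 f2 : O -> H).
Hypotheses (hf1 : hopf_hom DO eO D e f1) (hf2 : hopf_hom DO eO D e f2).

Lemma hopf_hom_sub_coproduct x :
  tens_eq (D (f1 x - f2 x))
    ([seq (f1 p.1 - f2 p.1, f1 p.2) | p <- DO x] ++
     [seq (f2 p.1, f1 p.2 - f2 p.2) | p <- DO x]).
Proof.
move=> W F bil_F; have D_linear := hopf_coproduct_linear hH.
rewrite (linB (coproduct_sum_linear D_linear (F := fun p => F p.1 p.2) bil_F)) /=.
rewrite (tens_eqP (hopf_hom_coproduct hf1 x)) /=; last by linearity.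
rewrite (tens_eqP (hopf_hom_coproduct hf2 x)) /=; last by linearity.
rewrite big_cat !big_map /=.
under [X in _ = X + _]eq_bigr do rewrite (linB (bilinear_l bil_F _)).
under [X in _ = _ + X]eq_bigr do rewrite (linB (bilinear_r bil_F _)).
by rewrite !sumrB addrA subrK.
Qed.

Lemma equalizer_hopf_ideal : hopf_ideal D e S (ideal_gen (fun x => f1 x - f2 x)).
Proof.
apply: (ideal_gen_hopf_ideal hH) => [x | x | x].
- eexists; split; first exact: hopf_hom_sub_coproduct.
  move=> p; rewrite mem_cat => /orP [] /mapP [q _ ->] /=.
  + by left; apply: (ideal_gen_generator (fun x => f1 x - f2 x)).
  + by right; apply: (ideal_gen_generator (fun x => f1 x - f2 x)).
- rewrite (scalarB (hopf_counit_scalar hH)).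
  by rewrite (hopf_hom_counit hf1) (hopf_hom_counit hf2) subrr.
rewrite (linB (hopf_antipode_linear hH)) !(hopf_hom_antipode hO hH) //.
exact: (ideal_gen_generator (fun x => f1 x - f2 x)).
Qed.
End EqualizerIdeal.

Theorem proposition1p1p2
  (k : fieldType)
  (* the Hopf algebra U *)
  (U : algType k) (DU : U -> seq (U * U)) (eU : U -> k) (SU : U -> U)
  (hU : is_hopf DU eU SU)
  (* the central Hopf subalgebra O, given with its inclusion iota : O -> U *)
  (O : comAlgType k) (DO : O -> seq (O * O)) (eO : O -> k) (SO : O -> O)
  (hO : is_hopf DO eO SO)
  (iota : O -> U) (hiota : hopf_hom DO eO DU eU iota)
  (iota_inj : injective iota)
  (iota_central : forall (x : O) (u : U), iota x * u = u * iota x)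
  (* a k-point chi of Spec O *)
  (chi : O -> k) (hchi : kpoint chi)
  (* R = functions on the closed subgroup scheme generated by chi,
     pi : O -> R the restriction map *)
  (R : comAlgType k) (DR : R -> seq (R * R)) (eR : R -> k) (SR : R -> R)
  (hR : is_hopf DR eR SR)
  (pi : O -> R) (hpi : hopf_hom DO eO DR eR pi)
  (pi_surj : forall r : R, exists x : O, pi x = r)
  (pi_ker : gen_subgroup_ideal DO eO SO chi (fun x => pi x = 0))
  (* T = U (x)_k R with its tensor-product Hopf algebra structure *)
  (T : algType k) (rho : U -> R -> T) (hT : is_tensor_algebra rho)
  (DT : T -> seq (T * T)) (eT : T -> k) (ST : T -> T)
  (hDT : tensor_hopf_structure rho DU eU SU DR eR SR DT eT ST) :
  is_hopf DT eT ST /\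
  hopf_ideal DT eT ST
    (fun t : T => exists l : seq (T * O * T),
       t = \sum_(z <- l) z.1.1 * (rho (iota z.1.2) 1 - rho 1 (pi z.1.2)) * z.2).
Proof.
have hTH := tensor_is_hopf hU hR hT hDT.
have hl := hopf_hom_comp (tensor_hopf_hom_l hR hT hDT) hiota.
have hr := hopf_hom_comp (tensor_hopf_hom_r hU hT hDT) hpi.
split; [exact: hTH | exact: (equalizer_hopf_ideal hO hTH hl hr)].
Qed.
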